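(* Let $G=(V,E)$ and $G'=(V',E')$ be undirected graphs. Then $\sigma(G\boxtimes G')=\sigma(G)\times\sigma(G')$, i.e. the semi-uniform structure $\mathcal{E}_{G\boxtimes G'}$ on $V\times V'$ coincides with the product semi-uniform structure $\mathcal{E}_G\times\mathcal{E}_{G'}$.
   Context: A semi-uniform structure on a set $X$ is a filter $\mathcal{U}$ on $X\times X$ (nonempty, not containing $\emptyset$, closed under supersets and finite intersections) such that every $U\in\mathcal{U}$ contains the diagonal and $U^{-1}\in\mathcal{U}$ for all $U\in\mathcal{U}$. For an undirected graph $G=(V,E)$, $\sigma(G)=(V,\mathcal{E}_G)$ where $\mathcal{E}_G$ is the filter on $V\times V$ generated by $E\cup\Delta_V$ (edges regarded as symmetric pairs). The strong graph product $G\boxtimes G'$ has vertex set $V\times V'$, and $((v_0,v_0'),(v_1,v_1'))$ is an edge iff either $(v_0,v_1)\in E$ and $(v_0',v_1')\in E'$, or $v_0=v_1$ and $(v_0',v_1')\in E'$, or $(v_0,v_1)\in E$ and $v_0'=v_1'$. For semi-uniform spaces $(X,\mathcal{U})$, $(Y,\mathcal{V})$, the product structure $\mathcal{U}\times\mathcal{V}$ on $X\times Y$ is the filter on $(X\times Y)\times(X\times Y)$ generated by the sets $\{((x_1,y_1),(x_2,y_2)):(x_1,x_2)\in U,(y_1,y_2)\in V\}$ with $U\in\mathcal{U}$, $V\in\mathcal{V}$. *)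

(* Sets are predicates; a filter on a type T is a
   predicate on sets (T -> Prop) -> Prop. *)
From Stdlib Require Import List.
Set Implicit Arguments.

Definition rel_set (X : Type) := X -> X -> Prop.

Definition inter_list (T : Type) (l : list (T -> Prop)) : T -> Prop :=
  fun x => forall A, In A l -> A x.

Definition generated_filter (T : Type) (B : (T -> Prop) -> Prop)
  : (T -> Prop) -> Prop :=
  fun U => exists l : list (T -> Prop),
      (forall A, In A l -> B A) /\ (forall x, inter_list l x -> U x).

Record graph (V : Type) := Graph {
  edge : V -> V -> Prop;
  edge_sym : forall x y, edge x y -> edge y x }.

Definition sigma_graph (V : Type) (G : graph V) : (V * V -> Prop) -> Prop :=
  generated_filter (fun A : V * V -> Prop =>
    forall p : V * V, A p <-> (edge G (fst p) (snd p) \/ fst p = snd p)).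

Definition strong_edge (V W : Type) (G : graph V) (H : graph W)
  (a b : V * W) : Prop :=
  (edge G (fst a) (fst b) /\ edge H (snd a) (snd b)) \/
  (fst a = fst b /\ edge H (snd a) (snd b)) \/
  (edge G (fst a) (fst b) /\ snd a = snd b).

Lemma strong_edge_sym (V W : Type) (G : graph V) (H : graph W) (a b : V * W) :
  strong_edge G H a b -> strong_edge G H b a.
Proof.
  unfold strong_edge; intros [[h1 h2]|[[h1 h2]|[h1 h2]]].
  - left; split; apply edge_sym; assumption.
  - right; left; split; [symmetry; assumption | apply edge_sym; assumption].
  - right; right; split; [apply edge_sym; assumption | symmetry; assumption].
Qed.

Definition strong_product (V W : Type) (G : graph V) (H : graph W)
  : graph (V * W) := @Graph (V * W) (strong_edge G H) (@strong_edge_sym V W G H).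

Definition product_structure (X Y : Type)
  (U : (X * X -> Prop) -> Prop) (W : (Y * Y -> Prop) -> Prop)
  : ((X * Y) * (X * Y) -> Prop) -> Prop :=
  generated_filter (fun A : (X * Y) * (X * Y) -> Prop =>
    exists U0 W0, U U0 /\ W W0 /\
      forall p : (X * Y) * (X * Y),
        A p <-> (U0 (fst (fst p), fst (snd p)) /\ W0 (snd (fst p), snd (snd p)))).

(* Both structures are principal filters: a filter generated by a single set
   consists of its supersets, and so does a product of principal filters.
   It therefore suffices to compare the generating sets, and the reflexive
   closure of the strong product edge relation is exactly the product of the
   reflexive closures of the two edge relations. *)
From Stdlib Require Import List.
Set Implicit Arguments.

Definition edge_or_diag (V : Type) (G : graph V) (p : V * V) : Prop :=
  edge G (fst p) (snd p) \/ fst p = snd p.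

Definition pair_rel (X Y : Type) (R : X * X -> Prop) (S : Y * Y -> Prop)
  (p : (X * Y) * (X * Y)) : Prop :=
  R (fst (fst p), fst (snd p)) /\ S (snd (fst p), snd (snd p)).

Lemma generated_filter_single (T : Type) (B0 U : T -> Prop) :
  generated_filter (fun A => forall x, A x <-> B0 x) U <->
  (forall x, B0 x -> U x).
Proof.
  split.
  - intros [l [Hl Hsub]] x Hx.
    apply Hsub; intros A HA; apply (Hl A HA); exact Hx.
  - intros Hsub; exists (B0 :: nil); split.
    + intros A [<- | []] x; tauto.
    + intros x Hx; apply Hsub, Hx; left; reflexivity.
Qed.

Lemma sigma_graph_iff (V : Type) (G : graph V) (U : V * V -> Prop) :
  sigma_graph G U <-> (forall p, edge_or_diag G p -> U p).
Proof. exact (generated_filter_single (edge_or_diag G) U). Qed.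

Lemma product_structure_principal (X Y : Type)
  {F : (X * X -> Prop) -> Prop} {F' : (Y * Y -> Prop) -> Prop}
  {R : X * X -> Prop} {S : Y * Y -> Prop}
  (HF : forall U, F U <-> (forall p, R p -> U p))
  (HF' : forall U, F' U <-> (forall p, S p -> U p))
  (A : (X * Y) * (X * Y) -> Prop) :
  product_structure F F' A <-> (forall p, pair_rel R S p -> A p).
Proof.
  split.
  - intros [l [Hl Hsub]] p [HR HS].
    apply Hsub; intros B HB.
    destruct (Hl B HB) as [U0 [W0 [HU [HW HB']]]].
    apply HB'; split; [apply (proj1 (HF U0) HU) | apply (proj1 (HF' W0) HW)];
      assumption.
  - intros Hsub; exists (pair_rel R S :: nil); split.
    + intros B [<- | []].
      exists R, S; split; [|split].
      * apply HF; auto.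
      * apply HF'; auto.
      * intro p; unfold pair_rel; tauto.
    + intros p Hp; apply Hsub, Hp; left; reflexivity.
Qed.

Lemma edge_or_diag_strong_product (V W : Type) (G : graph V) (H : graph W)
  (p : (V * W) * (V * W)) :
  edge_or_diag (strong_product G H) p <->
  pair_rel (edge_or_diag G) (edge_or_diag H) p.
Proof.
  destruct p as [[a1 a2] [b1 b2]].
  unfold edge_or_diag, pair_rel, strong_product, strong_edge; simpl.
  split.
  - intros [He | e]; [tauto | injection e; tauto].
  - intros [[e1 | <-] [e2 | <-]]; tauto.
Qed.

Theorem proposition5p3 (V W : Type) (G : graph V) (H : graph W) :
  forall A : (V * W) * (V * W) -> Prop,
    sigma_graph (strong_product G H) A <->
    product_structure (sigma_graph G) (sigma_graph H) A.
Proof.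
  intro A.
  rewrite sigma_graph_iff,
    (product_structure_principal (sigma_graph_iff G) (sigma_graph_iff H)).
  split; intros HA p Hp; apply HA, edge_or_diag_strong_product, Hp.
Qed.
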